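(* Let $a<b$ be real numbers and let $h,g:[a,b)\to\mathbb{R}$ be continuous functions which are differentiable on $(a,b)$, with $h'(t)>0$ for all $t\in(a,b)$, and such that $h$ is increasing and not constant on any neighborhood of $a$. For $x\in(a,b)$ let $\xi(x)$ be the supremum of the set of numbers $\tau\in(a,x)$ satisfying $$\frac{g(x)-g(a)}{h(x)-h(a)}=\frac{g'(\tau)}{h'(\tau)}$$ (this set is nonempty by Cauchy's mean value theorem). Suppose that the limit $\lim_{x\to a}\frac{g(x)-g(a)}{h(x)-h(a)}$ exists and is finite. Then $$\varlimsup_{x\to a}\frac{h(\xi(x))-h(a)}{h(x)-h(a)}\ \geq\ \frac1e.$$
   Context: Limits at $a$ are right-hand limits. *)

From Stdlib Require Import Reals.
From Coquelicot Require Import Coquelicot.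
Open Scope R_scope.

Definition cauchy_quot (h g : R -> R) (a x : R) : R :=
  (g x - g a) / (h x - h a).

Definition xi (h g : R -> R) (a x : R) : R :=
  real (Lub_Rbar (fun tau => a < tau < x /\
          cauchy_quot h g a x = Derive g tau / Derive h tau)).

Definition limsup_right (f : R -> R) (a b : R) : Rbar :=
  Glb_Rbar (fun y => exists delta, 0 < delta /\
     Finite y = Lub_Rbar (fun v => exists x, a < x < a + delta /\ x < b /\ v = f x)).

(* Suppose the ratio (h (xi x) - h a) / (h x - h a) stays below some c < 1/e near a.
   Then Q(x) = g'/h' has no solution in the window of points t < x with
   h t - h a > c (h x - h a), so by Darboux's theorem (for g - Q(x) h) the sign of
   g'/h' - Q(x) is constant on that window.  Take levels h x_k - h a = rho^k (h x_0 - h a)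
   with c < rho^(m+1) and (m+1)(1 - rho) > 1, which is possible precisely because
   c < 1/e.  Cauchy's mean value theorem on [x_(k+1), x_k] together with overlapping
   windows gives one sign s for which p_k = s (Q(x_k) - L) decreases to 0 and satisfies
   p_(j+m) - rho p_(j+m+1) >= (1 - rho) p_j; a decreasing null sequence cannot do that. *)

From Stdlib Require Import Reals Lra Lia Classical ClassicalEpsilon.
From Coquelicot Require Import Coquelicot.
Open Scope R_scope.

Lemma at_right_close (f : R -> R) (a l : R) :
  filterlim f (at_right a) (locally l) ->
  forall eps, 0 < eps -> exists eta, 0 < eta /\
    forall t, a < t < a + eta -> Rabs (f t - l) < eps.
Proof.
  intros Hf eps Heps.
  destruct (Hf (fun y => Rabs (y - l) < eps)) as [d Hd].
  { exists (mkposreal eps Heps). intros y Hy. exact Hy. }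
  exists d. split; [apply cond_pos|]. intros t Ht. apply Hd; [|lra].
  change (Rabs (t - a) < d). rewrite Rabs_pos_eq; lra.
Qed.

Lemma ex_derive_continuity_pt (f : R -> R) (t : R) : ex_derive f t -> continuity_pt f t.
Proof.
  intros Hd. apply continuity_pt_filterlim.
  exact (ex_derive_continuous (K := R_AbsRing) (V := R_NormedModule) f t Hd).
Qed.

Lemma Derive_pos_locally_increasing (f : R -> R) (u eta : R) :
  ex_derive f u -> 0 < Derive f u -> 0 < eta ->
  exists k, 0 < k < eta /\ f (u - k) < f u < f (u + k).
Proof.
  intros Hd Hpos Heta.
  apply Derive_correct, is_derive_Reals in Hd.
  destruct (Hd _ Hpos) as [d Hdiff].
  pose proof (cond_pos d).
  set (k := Rmin (d / 2) (eta / 2)).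
  assert (Hk : 0 < k < eta /\ k < d).
  { unfold k. pose proof (Rmin_l (d / 2) (eta / 2)). pose proof (Rmin_r (d / 2) (eta / 2)).
    assert (0 < Rmin (d / 2) (eta / 2)) by (apply Rmin_glb_lt; lra). lra. }
  (* both difference quotients are within [Derive f u] of [Derive f u], hence positive *)
  assert (Hq : forall z, z <> 0 -> Rabs z < d -> 0 < (f (u + z) - f u) / z).
  { intros z Hz Hzd. specialize (Hdiff z Hz Hzd). apply Rabs_def2 in Hdiff. lra. }
  exists k. split; [lra|].
  assert (Hr := Hq k ltac:(lra) ltac:(rewrite Rabs_pos_eq; lra)).
  assert (Hl := Hq (- k) ltac:(lra) ltac:(rewrite Rabs_Ropp, Rabs_pos_eq; lra)).
  replace (u + - k) with (u - k) in Hl by ring.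
  unfold Rdiv in Hr, Hl. rewrite Rinv_opp in Hl.
  assert (0 < / k) by (apply Rinv_0_lt_compat; lra).
  split; nra.
Qed.

Lemma Darboux (f : R -> R) (u v : R) : u < v ->
  (forall t, u <= t <= v -> ex_derive f t) ->
  0 < Derive f u -> Derive f v < 0 -> exists t, u < t < v /\ Derive f t = 0.
Proof.
  intros Huv Hd Hu Hv.
  destruct (continuity_ab_maj f u v) as [M [HM HMuv]]; [lra| |].
  { intros t Ht. apply ex_derive_continuity_pt, Hd; lra. }
  assert (HMu : M <> u).
  { intros ->. destruct (Derive_pos_locally_increasing f u (v - u)) as [k [Hk [_ Hfk]]];
      [apply Hd; lra | lra | lra |].
    specialize (HM (u + k) ltac:(lra)). lra. }
  assert (HMv : M <> v).
  { intros ->.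
    destruct (Derive_pos_locally_increasing (fun t => - f t) v (v - u)) as [k [Hk [Hfk _]]].
    - apply (ex_derive_opp (K := R_AbsRing) (V := R_NormedModule) f), Hd; lra.
    - rewrite Derive_opp; lra.
    - lra.
    - specialize (HM (v - k) ltac:(lra)). lra. }
  exists M. split; [lra|].
  assert (HdM : ex_derive f M) by (apply Hd; lra).
  rewrite <- (Derive_Reals f M (ex_derive_Reals_0 f M HdM)).
  apply deriv_maximum with u v; try lra.
  intros x Hx1 Hx2; apply HM; lra.
Qed.

Lemma Cauchy_MVT (h g : R -> R) (u v : R) : u < v ->
  (forall t, u <= t <= v -> ex_derive h t) ->
  (forall t, u <= t <= v -> ex_derive g t) ->
  exists tau, u < tau < v /\ (g v - g u) * Derive h tau = (h v - h u) * Derive g tau.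
Proof.
  intros Huv Hh Hg.
  assert (prh : forall t, u < t < v -> derivable_pt h t)
    by (intros t Ht; apply ex_derive_Reals_0, Hh; lra).
  assert (prg : forall t, u < t < v -> derivable_pt g t)
    by (intros t Ht; apply ex_derive_Reals_0, Hg; lra).
  destruct (MVT h g u v prh prg Huv) as [tau [Htau E]].
  - intros t Ht. apply ex_derive_continuity_pt, Hh; lra.
  - intros t Ht. apply ex_derive_continuity_pt, Hg; lra.
  - exists tau. split; [exact Htau|]. rewrite !Derive_Reals in E. exact E.
Qed.

Lemma right_continuous_IVT (f : R -> R) (a x0 v : R) : a < x0 ->
  filterlim f (at_right a) (locally (f a)) ->
  (forall t, a < t <= x0 -> continuous f t) ->
  f a < v <= f x0 -> exists x, a < x <= x0 /\ f x = v.
Proof.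
  intros Hax0 Hright Hcont [Hv Hvx0].
  destruct (Req_dec v (f x0)) as [->|Hne]; [exists x0; split; [lra|reflexivity]|].
  destruct (at_right_close f a (f a) Hright (v - f a)) as [eta [Heta Hclose]]; [lra|].
  set (a' := a + Rmin (eta / 2) ((x0 - a) / 2)).
  assert (Ha' : a < a' < x0 /\ a' < a + eta).
  { unfold a'. pose proof (Rmin_l (eta / 2) ((x0 - a) / 2)).
    pose proof (Rmin_r (eta / 2) ((x0 - a) / 2)).
    assert (0 < Rmin (eta / 2) ((x0 - a) / 2)) by (apply Rmin_glb_lt; lra). lra. }
  assert (Hfa' := Hclose a' ltac:(lra)). apply Rabs_def2 in Hfa'.
  destruct (Ranalysis5.IVT_interv (fun t => f t - v) a' x0) as [z [Hz Hfz]]; try lra.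
  { intros t Ht. apply continuity_pt_minus; [|apply continuity_pt_const; intros ? ?; reflexivity].
    apply continuity_pt_filterlim, Hcont; lra. }
  exists z. split; lra.
Qed.

Lemma real_Lub_Rbar_between (E : R -> Prop) (t M : R) :
  E t -> (forall z, E z -> z <= M) -> t <= real (Lub_Rbar E) <= M.
Proof.
  intros Et Hub.
  destruct (Lub_Rbar_correct E) as [Hl Hlub].
  assert (H1 := Hl t Et).
  assert (H2 : Rbar_le (Lub_Rbar E) M) by (apply Hlub; intros z Ez; apply Hub, Ez).
  revert H1 H2. destruct (Lub_Rbar E); simpl; tauto.
Qed.

Lemma limsup_right_ge (f : R -> R) (a b l : R) : a < b -> 0 < l ->
  (forall c x0, 0 < c < l -> a < x0 < b -> exists x, a < x <= x0 /\ c < f x) ->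
  Rbar_le l (limsup_right f a b).
Proof.
  intros Hab Hl Hfreq. unfold limsup_right.
  match goal with |- Rbar_le _ (Glb_Rbar ?E) => destruct (Glb_Rbar_correct E) as [_ Hglb] end.
  apply Hglb. intros y [delta [Hdelta Hy]]. simpl.
  destruct (Rle_lt_dec l y) as [|Hyl]; [assumption|exfalso].
  set (c := Rmax y (l / 2)).
  set (x0 := a + Rmin (delta / 2) ((b - a) / 2)).
  assert (Hx0 : a < x0 < a + delta /\ x0 < b).
  { unfold x0. pose proof (Rmin_l (delta / 2) ((b - a) / 2)).
    pose proof (Rmin_r (delta / 2) ((b - a) / 2)).
    assert (0 < Rmin (delta / 2) ((b - a) / 2)) by (apply Rmin_glb_lt; lra). lra. }
  destruct (Hfreq c x0) as [x [Hx Hcx]].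
  - unfold c. split; [pose proof (Rmax_r y (l / 2)); lra | apply Rmax_lub_lt; lra].
  - lra.
  - match type of Hy with _ = Lub_Rbar ?E => destruct (Lub_Rbar_correct E) as [Hub _] end.
    assert (Hfx : Rbar_le (f x) y).
    { rewrite Hy. apply Hub. exists x. repeat split; lra. }
    simpl in Hfx.
    pose proof (Rmax_l y (l / 2)). unfold c in Hcx. lra.
Qed.

Lemma pow_le_pow_le1 (r : R) (i n : nat) : 0 <= r <= 1 -> (i <= n)%nat -> r ^ n <= r ^ i.
Proof.
  intros Hr Hin. replace n with (i + (n - i))%nat by lia. rewrite pow_add.
  assert (r ^ (n - i) <= 1) by (rewrite <- (pow1 (n - i)); apply pow_incr; lra).
  assert (0 <= r ^ i) by (apply pow_le; lra).
  nra.
Qed.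

Lemma exp_pow (x : R) (n : nat) : exp x ^ n = exp (INR n * x).
Proof. rewrite <- Rpower_pow by apply exp_pos. unfold Rpower. rewrite ln_exp. reflexivity. Qed.

Lemma sum_f_R0_shift (p : nat -> R) (j m : nat) :
  sum_f_R0 (fun i => p (S j + i)%nat) m =
  sum_f_R0 (fun i => p (j + i)%nat) m - p j + p (S (j + m)).
Proof.
  induction m as [|m IH].
  - simpl. rewrite !Nat.add_0_r. ring.
  - rewrite !tech5, IH. replace (S (j + m)) with (j + S m)%nat by lia.
    replace (S (j + S m)) with (S j + S m)%nat by lia. ring.
Qed.

(* The weighted sum [V j] below is nonincreasing and bounded below by [- K p j];
   since [V 0 <= (1 - K) p m < 0], [p] cannot tend to 0. *)
Lemma lagged_ineq_not_null (p : nat -> R) (m : nat) (rho : R) :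
  0 < rho < 1 -> 1 < INR (S m) * (1 - rho) ->
  (forall k, p (S k) < p k) ->
  (forall eps, 0 < eps -> exists N, forall k, (N <= k)%nat -> Rabs (p k) < eps) ->
  (forall j, (1 - rho) * p j <= p (j + m)%nat - rho * p (S (j + m))) -> False.
Proof.
  intros Hrho HK Hdecr Hnull Hlag.
  assert (Hmono : forall j i, p (j + i)%nat <= p j).
  { intros j i; induction i as [|i IH].
    - rewrite Nat.add_0_r; lra.
    - specialize (Hdecr (j + i)%nat). rewrite <- plus_n_Sm. lra. }
  assert (Hnonneg : forall k, 0 <= p k).
  { intros k. destruct (Rle_lt_dec 0 (p k)) as [|Hneg]; [assumption|].
    destruct (Hnull (- p k)) as [N HN]; [lra|].
    specialize (HN (k + N)%nat ltac:(lia)). specialize (Hmono k N).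
    apply Rabs_def2 in HN. lra. }
  assert (Hpm : 0 < p m) by (specialize (Hdecr m); specialize (Hnonneg (S m)); lra).
  set (K := INR (S m) * (1 - rho)).
  set (V := fun j => p (j + m)%nat - (1 - rho) * sum_f_R0 (fun i => p (j + i)%nat) m).
  assert (HV : forall j, V j <= V 0%nat).
  { induction j as [|j IH]; [lra|].
    enough (V (S j) <= V j) by lra.
    unfold V. rewrite sum_f_R0_shift. simpl (S j + m)%nat. specialize (Hlag j). lra. }
  assert (HV0 : V 0%nat <= (1 - K) * p m).
  { assert (p m * INR (S m) <= sum_f_R0 (fun i => p (0 + i)%nat) m).
    { rewrite <- sum_cte. apply sum_Rle. intros n Hn.
      replace m with (0 + n + (m - n))%nat at 1 by lia. apply Hmono. }
    unfold V, K. simpl (0 + m)%nat. nra. }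
  assert (HVj : forall j, - K * p j <= V j).
  { intros j.
    assert (sum_f_R0 (fun i => p (j + i)%nat) m <= p j * INR (S m))
      by (rewrite <- sum_cte; apply sum_Rle; intros n _; apply Hmono).
    specialize (Hnonneg (j + m)%nat). unfold V, K. nra. }
  destruct (Hnull ((K - 1) * p m / K)) as [N HN].
  { unfold K in *. apply Rdiv_lt_0_compat; nra. }
  specialize (HN N (le_n N)). specialize (HV N). specialize (HVj N). specialize (Hnonneg N).
  rewrite Rabs_pos_eq in HN by lra.
  apply (Rmult_lt_compat_l K) in HN; [|unfold K in *; lra].
  replace (K * ((K - 1) * p m / K)) with ((K - 1) * p m) in HN by (field; unfold K in *; lra).
  lra.
Qed.

Lemma lag_parameters (c : R) : 0 < c < / exp 1 ->
  exists m rho, (1 <= m)%nat /\ 0 < rho < 1 /\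
    1 < INR (S m) * (1 - rho) /\ c < rho ^ S m.
Proof.
  intros [Hc0 Hc1].
  set (beta := - ln c).
  assert (Hbeta : 1 < beta).
  { rewrite <- exp_Ropp in Hc1. apply ln_increasing in Hc1; [|assumption].
    rewrite ln_exp in Hc1. unfold beta. lra. }
  set (alpha := (1 + beta) / 2).
  assert (Halpha : 1 < alpha < beta) by (unfold alpha; lra).
  clearbody alpha.
  destruct (INR_archimed 1 (Rmax (alpha * beta / (beta - alpha)) alpha)) as [n Hn]; [lra|].
  rewrite Rmult_1_r in Hn.
  assert (Hn1 : alpha * beta / (beta - alpha) < INR n)
    by (pose proof (Rmax_l (alpha * beta / (beta - alpha)) alpha); lra).
  assert (Hn2 : alpha < INR n) by (pose proof (Rmax_r (alpha * beta / (beta - alpha)) alpha); lra).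
  assert (Hn1' : alpha * beta < INR n * (beta - alpha)).
  { apply (Rmult_lt_compat_r (beta - alpha)) in Hn1; [|lra].
    unfold Rdiv in Hn1. rewrite Rmult_assoc, Rinv_l, Rmult_1_r in Hn1 by lra.
    exact Hn1. }
  destruct n as [|m]; [simpl in Hn2; lra|].
  set (n := INR (S m)) in *.
  set (y := alpha / n).
  assert (Hy : 0 < y < 1).
  { unfold y. split; [apply Rdiv_lt_0_compat; lra|].
    apply (Rmult_lt_reg_r n); [lra|]. unfold Rdiv. rewrite Rmult_assoc, Rinv_l; lra. }
  exists m, (1 - y). fold n. split; [|split; [lra|split]].
  - destruct m; [unfold n in Hn2; simpl in Hn2; lra|lia].
  - replace (n * (1 - (1 - y))) with alpha by (unfold y; field; lra). lra.
  - (* [1 - y >= exp (- y / (1 - y))] comes from [1 + z <= exp z] at [z = y / (1 - y)] *)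
    assert (Hlow : exp (- (y / (1 - y))) <= 1 - y).
    { assert (E := exp_ineq1_le (y / (1 - y))).
      replace (1 + y / (1 - y)) with (/ (1 - y)) in E by (field; lra).
      rewrite exp_Ropp.
      apply Rinv_le_contravar in E; [|apply Rinv_0_lt_compat; lra].
      rewrite Rinv_inv in E. exact E. }
    assert (Hpow : exp (- (y / (1 - y))) ^ S m <= (1 - y) ^ S m)
      by (apply pow_incr; split; [left; apply exp_pos|exact Hlow]).
    rewrite exp_pow in Hpow. fold n in Hpow.
    assert (Hexp : - beta < n * - (y / (1 - y))).
    { replace (n * - (y / (1 - y))) with (- (alpha * n / (n - alpha)))
        by (unfold y; field; lra).
      apply Ropp_lt_contravar.
      apply (Rmult_lt_reg_r (n - alpha)); [lra|].
      unfold Rdiv. rewrite Rmult_assoc, Rinv_l, Rmult_1_r by lra. nra. }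
    apply exp_increasing in Hexp.
    replace (exp (- beta)) with c in Hexp by (unfold beta; rewrite Ropp_involutive, exp_ln; auto).
    lra.
Qed.

Lemma increasing_nonconstant_gt (h : R -> R) (a b : R) :
  (forall x y, a <= x -> x <= y -> y < b -> h x <= h y) ->
  (forall delta, 0 < delta -> exists x, a < x < a + delta /\ x < b /\ h x <> h a) ->
  forall t, a < t < b -> h a < h t.
Proof.
  intros Hmono Hnc t Ht.
  destruct (Hnc (t - a)) as [x [Hx [Hxb Hne]]]; [lra|].
  assert (h a <= h x) by (apply Hmono; lra).
  assert (h x <= h t) by (apply Hmono; lra).
  destruct (Req_dec (h a) (h x)); [congruence|lra].
Qed.

Section CauchyQuotient.

Variables (a b : R) (h g : R -> R).
Hypothesis h_deriv : forall t, a < t < b -> ex_derive h t.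
Hypothesis g_deriv : forall t, a < t < b -> ex_derive g t.
Hypothesis h'_pos : forall t, a < t < b -> 0 < Derive h t.
Hypothesis h_mono : forall x y, a <= x -> x <= y -> y < b -> h x <= h y.
Hypothesis h_gt : forall t, a < t < b -> h a < h t.

Let ratio (t : R) : R := Derive g t / Derive h t.
Let Q (x : R) : R := cauchy_quot h g a x.

Lemma cauchy_quot_mul (x : R) : a < x < b -> Q x * (h x - h a) = g x - g a.
Proof. intros Hx. specialize (h_gt x Hx). unfold Q, cauchy_quot. field. lra. Qed.

Lemma Cauchy_MVT_ratio (u v : R) : a < u < v -> v < b ->
  exists tau, u < tau < v /\ g v - g u = ratio tau * (h v - h u).
Proof.
  intros Hu Hv.
  destruct (Cauchy_MVT h g u v) as [tau [Htau E]];
    [lra | intros t Ht; apply h_deriv; lra | intros t Ht; apply g_deriv; lra |].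
  exists tau. split; [exact Htau|].
  assert (0 < Derive h tau) by (apply h'_pos; lra).
  apply (Rmult_eq_reg_r (Derive h tau)); [|lra].
  rewrite E. unfold ratio. field. lra.
Qed.

(* Darboux's theorem applied to [g - k h], whose derivative is [h' (ratio - k)]. *)
Lemma ratio_IVT (u v k : R) : a < u < v -> v < b ->
  (ratio u - k) * (ratio v - k) < 0 -> exists t, u < t < v /\ ratio t = k.
Proof.
  intros Hu Hv Hsign.
  set (F := fun s => g s - k * h s).
  assert (HF : forall s, u <= s <= v ->
    ex_derive F s /\ Derive F s = Derive h s * (ratio s - k)).
  { intros s Hs. assert (Hp := h'_pos s ltac:(lra)).
    assert (Hg := g_deriv s ltac:(lra)).
    assert (Hkh : ex_derive (fun s => k * h s) s) by (apply ex_derive_scal, h_deriv; lra).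
    split; [apply (ex_derive_minus (K := R_AbsRing) (V := R_NormedModule)); assumption|].
    unfold F. rewrite Derive_minus, Derive_scal by assumption.
    unfold ratio. field. lra. }
  assert (Hu' := h'_pos u ltac:(lra)). assert (Hv' := h'_pos v ltac:(lra)).
  destruct (HF u ltac:(lra)) as [_ HFu]. destruct (HF v ltac:(lra)) as [_ HFv].
  assert (Hzero : exists t, u < t < v /\ Derive F t = 0).
  { destruct (Rlt_le_dec 0 (ratio u - k)) as [Hpos|Hneg].
    - apply Darboux; [lra | intros s Hs; apply HF, Hs | nra | nra].
    - destruct (Darboux (fun s => - F s) u v) as [t [Ht Ht0]].
      + lra.
      + intros s Hs. apply (ex_derive_opp (K := R_AbsRing) (V := R_NormedModule)), HF, Hs.
      + rewrite Derive_opp. assert (ratio u - k <> 0) by (intros E; rewrite E in Hsign; lra). nra.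
      + rewrite Derive_opp. nra.
      + exists t. split; [exact Ht|]. rewrite Derive_opp in Ht0. lra. }
  destruct Hzero as [t [Ht Ht0]].
  exists t. split; [exact Ht|].
  destruct (HF t ltac:(lra)) as [_ HFt]. rewrite HFt in Ht0.
  assert (0 < Derive h t) by (apply h'_pos; lra).
  apply Rmult_integral in Ht0. destruct Ht0; lra.
Qed.

Lemma xi_bounds (x t : R) : a < t < x -> Q x = ratio t -> t <= xi h g a x <= x.
Proof.
  intros Ht E. apply real_Lub_Rbar_between; [split; assumption|].
  intros z [Hz _]. lra.
Qed.

Definition window (c x t : R) : Prop := a < t < x /\ c * (h x - h a) < h t - h a.

Definition one_sided (c s x : R) : Prop :=
  forall t, window c x t -> 0 < s * (ratio t - Q x).

Lemma window_ratio_neq (c x t : R) : a < x < b ->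
  (h (xi h g a x) - h a) / (h x - h a) <= c -> window c x t -> ratio t <> Q x.
Proof.
  intros Hx Hxi [Ht Hw] E.
  destruct (xi_bounds x t Ht (eq_sym E)) as [Htxi Hxix].
  assert (h t <= h (xi h g a x)) by (apply h_mono; lra).
  assert (Hd := h_gt x Hx).
  apply (Rmult_le_compat_r (h x - h a)) in Hxi; [|lra].
  unfold Rdiv in Hxi. rewrite Rmult_assoc, Rinv_l, Rmult_1_r in Hxi by lra.
  lra.
Qed.

Lemma one_sided_dichotomy (c x : R) : a < x < b ->
  (forall t, window c x t -> ratio t <> Q x) -> one_sided c 1 x \/ one_sided c (-1) x.
Proof.
  intros Hx Hneq.
  destruct (classic (one_sided c 1 x)) as [Hpos|Hnpos]; [left; exact Hpos|right].
  apply not_all_ex_not in Hnpos. destruct Hnpos as [t1 Ht1].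
  apply imply_to_and in Ht1. destruct Ht1 as [Hw1 Ht1].
  assert (Hlt1 : ratio t1 < Q x) by (specialize (Hneq t1 Hw1); lra).
  intros t2 Hw2.
  destruct (Rlt_le_dec (ratio t2) (Q x)) as [Hlt2|Hge2]; [lra|exfalso].
  assert (Hgt2 : Q x < ratio t2) by (specialize (Hneq t2 Hw2); lra).
  (* the window is an interval, so it contains the point between [t1] and [t2] given by [ratio_IVT] *)
  assert (Hbetween : forall u v, window c x u -> window c x v -> u < v ->
    (ratio u - Q x) * (ratio v - Q x) < 0 -> False).
  { intros u v [Hu Hwu] [Hv Hwv] Huv Hsign.
    destruct (ratio_IVT u v (Q x)) as [t [Ht Et]]; [lra | lra | exact Hsign |].
    apply (Hneq t); [|exact Et].
    split; [lra|]. assert (h u <= h t) by (apply h_mono; lra). lra. }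
  destruct (Rtotal_order t1 t2) as [H12|[H12|H21]].
  - apply (Hbetween t1 t2); [assumption..|nra].
  - subst. lra.
  - apply (Hbetween t2 t1); [assumption..|nra].
Qed.

Section GeometricLevels.

Variables (c rho H0 : R) (m : nat) (xs : nat -> R).
Hypothesis rho_range : 0 < rho < 1.
Hypothesis H0_pos : 0 < H0.
Hypothesis c_lt : c < rho ^ S m.
Hypothesis xs_range : forall k, a < xs k < b.
Hypothesis xs_level : forall k, h (xs k) - h a = rho ^ k * H0.

Lemma level_pos (k : nat) : 0 < rho ^ k * H0.
Proof. apply Rmult_lt_0_compat; [apply pow_lt; lra | exact H0_pos]. Qed.

Lemma xs_decr (k : nat) : xs (S k) < xs k.
Proof.
  destruct (Rlt_le_dec (xs (S k)) (xs k)) as [|Hle]; [assumption|exfalso].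
  assert (h (xs k) <= h (xs (S k))) by (apply h_mono; [apply Rlt_le, xs_range | exact Hle | apply xs_range]).
  assert (Hk := xs_level k). assert (HSk := xs_level (S k)). simpl in HSk.
  assert (Hpos := level_pos k). nra.
Qed.

Lemma xs_antitone (j k : nat) : (j <= k)%nat -> xs k <= xs j.
Proof.
  induction 1 as [|k _ IH]; [lra|]. specialize (xs_decr k). lra.
Qed.

Lemma window_between (j k : nat) (t : R) : (j <= k <= j + m)%nat ->
  xs (S k) < t < xs k -> window c (xs j) t.
Proof.
  intros Hjk Ht. split.
  - split; [pose proof (xs_range (S k)); lra|]. pose proof (xs_antitone j k ltac:(lia)). lra.
  - assert (h (xs (S k)) <= h t) by (apply h_mono; [apply Rlt_le, xs_range | lra | pose proof (xs_range k); lra]).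
    rewrite xs_level.
    assert (Hpow : rho ^ (j + S m) <= rho ^ S k) by (apply pow_le_pow_le1; [lra | lia]).
    rewrite pow_add in Hpow.
    pose proof (xs_level (S k)). pose proof (level_pos j).
    assert (c * (rho ^ j * H0) < rho ^ S m * (rho ^ j * H0)) by (apply Rmult_lt_compat_r; assumption).
    assert (rho ^ j * rho ^ S m * H0 <= rho ^ S k * H0) by (apply Rmult_le_compat_r; lra).
    lra.
Qed.

(* The Cauchy mean value theorem on [[xs (S k), xs k]], divided by [h (xs k) - h a]. *)
Lemma quot_increment (k : nat) : exists tau, xs (S k) < tau < xs k /\
  Q (xs k) - rho * Q (xs (S k)) = (1 - rho) * ratio tau.
Proof.
  destruct (Cauchy_MVT_ratio (xs (S k)) (xs k)) as [tau [Htau E]];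
    [split; [apply xs_range | apply xs_decr] | apply xs_range |].
  exists tau. split; [exact Htau|].
  assert (Ek := cauchy_quot_mul (xs k) (xs_range k)).
  assert (ESk := cauchy_quot_mul (xs (S k)) (xs_range (S k))).
  assert (Hgap : Q (xs k) * (h (xs k) - h a) - Q (xs (S k)) * (h (xs (S k)) - h a)
    = ratio tau * ((h (xs k) - h a) - (h (xs (S k)) - h a))) by lra.
  rewrite !xs_level in Hgap. simpl in Hgap.
  apply (Rmult_eq_reg_r (rho ^ k * H0)); [|apply Rgt_not_eq, level_pos].
  lra.
Qed.

Lemma one_sided_lag_ineq (s : R) (j k : nat) : one_sided c s (xs j) ->
  (j <= k <= j + m)%nat ->
  0 < s * (Q (xs k) - rho * Q (xs (S k)) - (1 - rho) * Q (xs j)).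
Proof.
  intros Hs Hjk.
  destruct (quot_increment k) as [tau [Htau E]].
  assert (Hw := Hs tau (window_between j k tau Hjk Htau)).
  replace (s * (Q (xs k) - rho * Q (xs (S k)) - (1 - rho) * Q (xs j)))
    with ((1 - rho) * (s * (ratio tau - Q (xs j)))) by (rewrite E; ring).
  apply Rmult_lt_0_compat; lra.
Qed.

Lemma one_sided_quot_decr (s : R) (k : nat) : one_sided c s (xs k) ->
  0 < s * (Q (xs k) - Q (xs (S k))).
Proof.
  intros Hs. assert (E := one_sided_lag_ineq s k k Hs ltac:(lia)).
  replace (s * (Q (xs k) - rho * Q (xs (S k)) - (1 - rho) * Q (xs k)))
    with (rho * (s * (Q (xs k) - Q (xs (S k))))) in E by ring.
  apply (Rmult_lt_reg_l rho); lra.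
Qed.

(* Consecutive windows overlap (here [1 <= m] is needed), which forces equal signs. *)
Lemma one_sided_succ (s : R) (k : nat) : (1 <= m)%nat -> s = 1 \/ s = -1 ->
  (one_sided c 1 (xs (S k)) \/ one_sided c (-1) (xs (S k))) ->
  one_sided c s (xs k) -> one_sided c s (xs (S k)).
Proof.
  intros Hm Hs Hnext Hk.
  assert (Hdecr := one_sided_quot_decr s k Hk).
  set (t := (xs (S (S k)) + xs (S k)) / 2).
  assert (Ht : xs (S (S k)) < t < xs (S k)) by (pose proof (xs_decr (S k)); unfold t; lra).
  assert (Hwk := Hk t (window_between k (S k) t ltac:(lia) Ht)).
  assert (Hw1 := window_between (S k) (S k) t ltac:(lia) Ht).
  destruct Hnext as [Hnext|Hnext]; assert (Ht1 := Hnext t Hw1);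
    destruct Hs as [->| ->]; solve [assumption | exfalso; lra].
Qed.

Lemma xs_tends_to_a (eta : R) : 0 < eta -> exists N, forall k, (N <= k)%nat -> xs k < a + eta.
Proof.
  intros Heta.
  assert (Hab : a < b) by (pose proof (xs_range 0); lra).
  set (eta' := Rmin eta ((b - a) / 2)).
  assert (Heta' : 0 < eta' <= eta /\ a + eta' < b).
  { unfold eta'. pose proof (Rmin_l eta ((b - a) / 2)). pose proof (Rmin_r eta ((b - a) / 2)).
    assert (0 < Rmin eta ((b - a) / 2)) by (apply Rmin_glb_lt; lra). lra. }
  assert (Hd := h_gt (a + eta') ltac:(lra)).
  destruct (pow_lt_1_zero rho ltac:(rewrite Rabs_pos_eq; lra) ((h (a + eta') - h a) / H0))
    as [N HN]; [apply Rdiv_lt_0_compat; lra|].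
  exists N. intros k Hk.
  specialize (HN k Hk). rewrite Rabs_pos_eq in HN by (apply pow_le; lra).
  apply (Rmult_lt_compat_r H0) in HN; [|exact H0_pos].
  unfold Rdiv in HN. rewrite Rmult_assoc, Rinv_l, Rmult_1_r in HN by lra.
  destruct (Rlt_le_dec (xs k) (a + eta')) as [|Hle]; [lra|exfalso].
  assert (h (a + eta') <= h (xs k)) by (apply h_mono; [lra | exact Hle | apply xs_range]).
  specialize (xs_level k). lra.
Qed.

Lemma one_sided_levels_absurd (L : R) : (1 <= m)%nat -> 1 < INR (S m) * (1 - rho) ->
  filterlim Q (at_right a) (locally L) ->
  (forall k, one_sided c 1 (xs k) \/ one_sided c (-1) (xs k)) -> False.
Proof.
  intros Hm HK HL Hdich.
  assert (Hsides : exists s, (s = 1 \/ s = -1) /\ forall k, one_sided c s (xs k)).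
  { destruct (Hdich 0%nat) as [H1|H1]; [exists 1|exists (-1)]; (split; [tauto|]);
      intros k; induction k as [|k IH]; try assumption;
      apply one_sided_succ; auto. }
  destruct Hsides as [s [Hs Hside]].
  apply (lagged_ineq_not_null (fun k => s * (Q (xs k) - L)) m rho rho_range HK).
  - intros k. pose proof (one_sided_quot_decr s k (Hside k)). lra.
  - intros eps Heps.
    destruct (at_right_close Q a L HL eps Heps) as [eta [Heta Hclose]].
    destruct (xs_tends_to_a eta Heta) as [N HN].
    exists N. intros k Hk.
    assert (Habs : Rabs s = 1) by (destruct Hs as [-> | ->]; [apply Rabs_R1 | rewrite Rabs_left; lra]).
    rewrite Rabs_mult, Habs, Rmult_1_l. apply Hclose.
    specialize (HN k Hk). specialize (xs_range k). lra.
  - intros j. pose proof (one_sided_lag_ineq s j (j + m) (Hside j) ltac:(lia)). lra.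
Qed.

End GeometricLevels.

Lemma geometric_levels (rho x0 : R) : filterlim h (at_right a) (locally (h a)) ->
  0 < rho < 1 -> a < x0 < b ->
  exists xs : nat -> R, forall k, a < xs k <= x0 /\ h (xs k) - h a = rho ^ k * (h x0 - h a).
Proof.
  intros Hright Hrho Hx0.
  apply (choice (fun k x => a < x <= x0 /\ h x - h a = rho ^ k * (h x0 - h a))). intros k.
  assert (Hx0a := h_gt x0 Hx0).
  assert (Hrhok : 0 < rho ^ k <= 1)
    by (split; [apply pow_lt; lra | rewrite <- (pow1 k); apply pow_incr; lra]).
  destruct (right_continuous_IVT h a x0 (h a + rho ^ k * (h x0 - h a))) as [x [Hx Ex]].
  - lra.
  - exact Hright.
  - intros t Ht. apply (ex_derive_continuous (K := R_AbsRing) (V := R_NormedModule)), h_deriv. lra.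
  - nra.
  - exists x. split; [exact Hx | lra].
Qed.

Lemma xi_ratio_frequently_gt (L c x0 : R) :
  filterlim h (at_right a) (locally (h a)) ->
  filterlim Q (at_right a) (locally L) ->
  0 < c < / exp 1 -> a < x0 < b ->
  exists x, a < x <= x0 /\ c < (h (xi h g a x) - h a) / (h x - h a).
Proof.
  intros Hright HL Hc Hx0.
  apply NNPP. intros Hnone.
  destruct (lag_parameters c Hc) as [m [rho [Hm [Hrho [HK Hcm]]]]].
  destruct (geometric_levels rho x0 Hright Hrho Hx0) as [xs Hxs].
  assert (H0_pos : 0 < h x0 - h a) by (specialize (h_gt x0 Hx0); lra).
  assert (xs_range : forall k, a < xs k < b) by (intros k; specialize (Hxs k); lra).
  apply (one_sided_levels_absurd c rho (h x0 - h a) m xs Hrho H0_pos Hcm xs_range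
           (fun k => proj2 (Hxs k)) L Hm HK HL).
  intros k. apply one_sided_dichotomy; [apply xs_range|].
  intros t. apply window_ratio_neq; [apply xs_range|].
  apply Rnot_lt_le. intros Hlt. apply Hnone. exists (xs k). split; [apply Hxs | exact Hlt].
Qed.

End CauchyQuotient.

Theorem theorem4 (a b : R) (h g : R -> R) :
  a < b ->
  (* continuity on [a,b): right-continuity at a, continuity on (a,b) *)
  filterlim h (at_right a) (locally (h a)) ->
  filterlim g (at_right a) (locally (g a)) ->
  (forall t, a < t < b -> continuous h t) ->
  (forall t, a < t < b -> continuous g t) ->
  (* differentiability on (a,b) *)
  (forall t, a < t < b -> ex_derive h t) ->
  (forall t, a < t < b -> ex_derive g t) ->
  (forall t, a < t < b -> 0 < Derive h t) ->
  (* h increasing on [a,b) and not constant on any neighbourhood of a *)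
  (forall x y, a <= x -> x <= y -> y < b -> h x <= h y) ->
  (forall delta, 0 < delta -> exists x, a < x < a + delta /\ x < b /\ h x <> h a) ->
  (* the limit of the Cauchy quotient at a+ exists and is finite *)
  (exists l : R, filterlim (fun x => cauchy_quot h g a x) (at_right a) (locally l)) ->
  Rbar_le (Finite (/ exp 1))
    (limsup_right (fun x => (h (xi h g a x) - h a) / (h x - h a)) a b).
Proof.
  intros Hab Hh_right _ _ _ Hh_deriv Hg_deriv Hh'_pos Hh_mono Hh_nonconst [L HL].
  apply limsup_right_ge; [exact Hab | apply Rinv_0_lt_compat, exp_pos |].
  intros c x0 Hc Hx0.
  apply (xi_ratio_frequently_gt a b h g) with L; try assumption.
  exact (increasing_nonconstant_gt h a b Hh_mono Hh_nonconst).
Qed.
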